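(* Let $R$ be a finitely generated commutative ring which is reduced, equipped with a ring homomorphism $\alpha:R\to\mathbb{Z}$ and a regular element $r\in R$. Then there exists a finite subset $S\subset R$ such that $\mathcal{K}_r(x)=\mathcal{K}_r^S(x)$ for all $x\in R$.
   Context: An element $r\in R$ is regular if $\alpha(r)\neq 0$ and $x\cdot r=\alpha(x)r$ for all $x\in R$. The Knutson Index $\mathcal{K}_r(x)$ of $x\in R$ is the non-negative integer $m$ such that $Rx\cap\mathbb{Z}r=m\mathbb{Z}r$. For a subset $S\subseteq R$ and $x\in R$, let $S(x)=\{s\in S: s\cdot x\in\mathbb{Z}r\}$ and $\mathrm{Ind}(x)=\{m\in\mathbb{Z}: s\cdot x=m r \text{ for some } s\in S(x)\}$. The Knutson $S$-subindex is $\mathcal{K}_r^S(x)=\gcd(\mathrm{Ind}(x))$, and $\mathcal{K}_r^S(x)=\infty$ if $S(x)=\emptyset$. *)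

From HB Require Import structures.
From mathcomp Require Import all_boot all_order all_algebra.
Set Implicit Arguments. Unset Strict Implicit. Unset Printing Implicit Defensive.
Import Order.TTheory GRing.Theory Num.Theory.
Local Open Scope ring_scope.

Definition fin_gen_ring (R : comNzRingType) : Prop :=
  exists gs : seq R, forall (P : R -> Prop),
    P 1 ->
    (forall a b, P a -> P b -> P (a - b)) ->
    (forall a b, P a -> P b -> P (a * b)) ->
    (forall g, g \in gs -> P g) ->
    forall x, P x.

Definition reduced_ring (R : comNzRingType) : Prop :=
  forall (x : R) (n : nat), x ^+ n = 0 -> x = 0.

Definition regular_elt (R : comNzRingType) (alpha : {rmorphism R -> int}) (r : R) : Prop :=
  alpha r != 0 /\ forall x : R, x * r = r *~ alpha x.

Definition knutson_index_is (R : comNzRingType) (r x : R) (m : nat) : Prop :=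
  forall y : R,
    ((exists a : R, y = a * x) /\ (exists n : int, y = r *~ n))
    <-> (exists n : int, y = r *~ (m%:Z * n)).

Definition Ind (R : comNzRingType) (S : seq R) (r x : R) (m : int) : Prop :=
  exists2 s, s \in S & s * x = r *~ m.

Definition is_gcd (I : int -> Prop) (g : nat) : Prop :=
  forall d : int, (d %| g%:Z)%Z <-> (forall i, I i -> (d %| i)%Z).

(* Knutson S-subindex: None encodes infinity (S(x) empty),
   Some g encodes gcd(Ind(x)) = g when S(x) is nonempty. *)
Definition subindex_is (R : comNzRingType) (S : seq R) (r x : R) (k : option nat) : Prop :=
  match k with
  | None => forall s, s \in S -> ~ (exists n : int, s * x = r *~ n)
  | Some g => (exists2 s, s \in S & exists n : int, s * x = r *~ n)
              /\ is_gcd (Ind S r x) g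
  end.

(* R is finitely generated, hence Noetherian by the Hilbert basis theorem, so
   its zero ideal contains a product of finitely many primes P_1, ..., P_n; as R
   is reduced, their intersection is 0.  A prime not containing r contains every
   y - alpha(y) (because r (y - alpha y) = 0), so there R looks like Z and the
   equation s x = m r reduces to alpha(s) alpha(x) = m alpha(r); a prime
   containing r but not x must contain s.  Hence whether s x = m r holds only
   depends on alpha(s) and on which of these primes contain s.  The generator m
   of {z | z r in R x} divides alpha(x), which forces a witness with
   |alpha(s)| <= |alpha(r)|, so one s for each set of primes and each such value
   of alpha(s) gives the finite set S. *)

From HB Require Import structures.
From mathcomp Require Import all_boot all_order all_algebra.
From mathcomp Require Import zify ring.
From mathcomp Require Import boolp.
Import GRing.Theory Num.Theory.
Local Open Scope ring_scope.
Set Implicit Arguments. Unset Strict Implicit.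

Lemma finite_witnesses (X Y : eqType) (Q : X -> Y -> Prop) (xs : seq X) :
  exists S : seq Y, (forall y, y \in S -> exists2 x, x \in xs & Q x y) /\
    forall x, x \in xs -> (exists y, Q x y) -> exists2 y, y \in S & Q x y.
Proof.
elim: xs => [|x xs [S [SQ QS]]]; first by exists [::].
have [[y Qy]|noQ] := EM (exists y, Q x y); last first.
  exists S; split=> [y /SQ [x' xs_x' Qx'y]|x'].
    by exists x' => //; rewrite in_cons xs_x' orbT.
  by rewrite in_cons => /predU1P [-> /noQ|/QS].
exists (y :: S); split=> [y'|x'].
  rewrite in_cons => /predU1P [->|/SQ [x' xs_x' Qx'y']].
    by exists x; rewrite ?mem_head.
  by exists x' => //; rewrite in_cons xs_x' orbT.
rewrite in_cons => /predU1P [-> _|/QS xsS /xsS [y' Sy' Qy']].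
  by exists y; rewrite ?mem_head.
by exists y' => //; rewrite in_cons Sy' orbT.
Qed.

Section Ideals.
Variable R : comNzRingType.
Implicit Types (I J : R -> Prop) (s : seq R).

Record ideal I : Prop := Ideal {
  ideal0 : I 0;
  idealB : forall a b, I a -> I b -> I (a - b);
  idealMl : forall a b, I b -> I (a * b) }.

Definition span s x := exists c : nat -> R, x = \sum_(i < size s) c i * s`_i.

Definition noetherian := forall I, ideal I -> exists s, forall x, I x <-> span s x.

Lemma idealN I a : ideal I -> I a -> I (- a).
Proof. by move=> hI Ia; rewrite -sub0r; apply: idealB (ideal0 hI) Ia. Qed.

Lemma idealD I a b : ideal I -> I a -> I b -> I (a + b).
Proof. by move=> hI Ia Ib; rewrite -[b]opprK; apply: idealB (idealN hI Ib). Qed.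

Lemma idealMr I a b : ideal I -> I a -> I (a * b).
Proof. by move=> hI Ia; rewrite mulrC; apply: idealMl. Qed.

Lemma ideal_sum I n (F : 'I_n -> R) :
  ideal I -> (forall i, I (F i)) -> I (\sum_(i < n) F i).
Proof. by move=> hI hF; apply: (big_ind I) => //; [apply: ideal0 | move=> ? ?; apply: idealD]. Qed.

Lemma span_ideal s : ideal (span s).
Proof.
split.
- by exists (fun=> 0); rewrite big1 // => i _; rewrite mul0r.
- move=> _ _ [c1 ->] [c2 ->]; exists (fun i => c1 i - c2 i).
  by rewrite -sumrB; apply: eq_bigr => i _; rewrite mulrBl.
- move=> a _ [c ->]; exists (fun i => a * c i).
  by rewrite mulr_sumr; apply: eq_bigr => i _; rewrite mulrA.
Qed.

Lemma span_nth s i : (i < size s)%N -> span s s`_i.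
Proof.
move=> lti; exists (fun j => (j == i)%:R).
rewrite (bigD1 (Ordinal lti)) //= eqxx mul1r big1 ?addr0 // => j /negbTE.
by rewrite -val_eqE /= => ->; rewrite mul0r.
Qed.

Lemma span_mem s x : x \in s -> span s x.
Proof. by move=> xs; rewrite -(nth_index 0 xs); apply: span_nth; rewrite index_mem. Qed.

Lemma span_min I s : ideal I -> (forall x, x \in s -> I x) -> forall x, span s x -> I x.
Proof.
move=> hI sI _ [c ->]; apply: ideal_sum => // i.
by apply: idealMl => //; apply: sI; apply: mem_nth.
Qed.

Lemma noetherian_chain_stable (c : nat -> R -> Prop) :
  noetherian -> (forall k, ideal (c k)) -> (forall k x, c k x -> c k.+1 x) ->
  exists N, forall k x, c k x -> c N x.
Proof.
move=> nR c_ideal c_succ.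
have c_mono k l x : (k <= l)%N -> c k x -> c l x.
  by move=> /subnKC <-; elim: (l - k)%N => [|j IH]; rewrite ?addn0 // addnS => /IH /c_succ.
pose U x := exists k, c k x.
have U_ideal : ideal U.
  split; first by exists 0%N; apply: ideal0.
  - move=> a b [k ca] [l cb]; exists (maxn k l).
    by apply: idealB; [|apply: c_mono ca; apply: leq_maxl|apply: c_mono cb; apply: leq_maxr].
  - by move=> a b [k cb]; exists k; apply: idealMl.
have [s Us] := nR _ U_ideal.
have [N sN] : exists N, forall x, x \in s -> c N x.
  have sU x : x \in s -> U x by move=> /span_mem /Us.
  elim: s sU {Us} => [|y s IH] sU; first by exists 0%N.
  have [k cy] := sU y (mem_head y s).
  have [l sl] := IH (fun x xs => sU x (mem_behead (s := y :: s) xs)).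
  exists (maxn k l) => x; rewrite in_cons => /predU1P [->|xs].
    by apply: c_mono cy; apply: leq_maxl.
  by apply: c_mono (sl x xs); apply: leq_maxr.
exists N => k x ckx; apply: (span_min (c_ideal N) sN).
by apply/Us; exists k.
Qed.

Lemma noetherian_maximal (F : (R -> Prop) -> Prop) I0 :
  noetherian -> (forall I, F I -> ideal I) -> F I0 ->
  exists2 M, F M & forall J, F J -> (forall x, M x -> J x) -> forall x, J x -> M x.
Proof.
move=> nR F_ideal FI0; apply: contrapT => no_max.
have [next hnext] : {next : (R -> Prop) -> R -> Prop & forall M, F M ->
    [/\ F (next M), forall x, M x -> next M x & exists x, next M x /\ ~ M x]}.
  apply: (@choice (R -> Prop) (R -> Prop) (fun M J => F M ->
    [/\ F J, forall x, M x -> J x & exists x, J x /\ ~ M x])) => M.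
  have [FM|nFM] := EM (F M); last by exists M.
  apply: contrapT => no_next; apply: no_max; exists M => // J FJ MJ x Jx.
  by apply: contrapT => nMx; apply: no_next; exists J => _; split=> //; exists x.
pose c k := iter k next I0.
have Fc k : F (c k) by elim: k => //= k IH; have [] := hnext _ IH.
have [N cN] := noetherian_chain_stable nR (fun k => F_ideal _ (Fc k))
  (fun k => let: And3 _ sub _ := hnext _ (Fc k) in sub).
have [_ _ [x [cx ncx]]] := hnext _ (Fc N).
by apply: ncx; apply: (cN N.+1).
Qed.

End Ideals.

Lemma int_ideal_principal (I : int -> Prop) :
  ideal I -> exists m : nat, forall z, I z <-> (m%:Z %| z)%Z.
Proof.
move=> hI.
have I_dvd (d z : int) : I d -> (d %| z)%Z -> I z.
  by move=> Id /dvdzP [k ->]; apply: idealMl.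
have [[z Iz nz0]|all0] := EM (exists2 z, I z & z != 0); last first.
  exists 0%N => z; rewrite dvd0z; split=> [Iz|/eqP ->]; last exact: ideal0.
  apply/eqP; apply: contrapT => nz; apply: all0.
  by exists z => //; apply/eqP.
have ex : exists k, (0 < k)%N && `[< I k%:Z >].
  exists `|z|%N; rewrite absz_gt0 nz0; apply/asboolP/(I_dvd z) => //.
  by rewrite dvdzE absz_nat.
have [m /andP [m_gt0 /asboolP Im] m_min] := ex_minnP ex.
exists m => w; split=> [Iw|]; last exact: I_dvd.
have m_neq0 : m%:Z != 0 by rewrite eqz_nat -lt0n.
have Imod : I (w %% m)%Z.
  have -> : (w %% m)%Z = w - (w %/ m)%Z * m%:Z by rewrite {2}(divz_eq w m) addrC addKr.
  by apply: idealB => //; apply: idealMl.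
apply/dvdz_mod0P/eqP; apply: contraT => mod_neq0.
have := m_min `|(w %% m)%Z|%N; rewrite absz_gt0 mod_neq0 gez0_abs ?modz_ge0 //.
move=> /(_ (asboolT Imod)); rewrite leqNgt -ltz_nat gez0_abs ?modz_ge0 //.
by rewrite ltz_pmod // ltz_nat.
Qed.

Lemma noetherian_int : noetherian int.
Proof.
move=> I /int_ideal_principal [m hm]; exists [:: m%:Z] => x; rewrite hm.
split=> [/dvdzP [k ->]|[c ->]]; first by exists (fun=> k); rewrite big_ord1.
by rewrite big_ord1 dvdz_mull.
Qed.

Lemma noetherian_surj (A R : comNzRingType) (f : {rmorphism A -> R}) :
  (forall x, exists y, f y = x) -> noetherian A -> noetherian R.
Proof.
move=> f_surj nA I hI.
have hJ : ideal (fun y => I (f y)).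
  split; first by rewrite rmorph0; apply: ideal0.
  - by move=> a b Ia Ib; rewrite rmorphB; apply: idealB.
  - by move=> a b Ib; rewrite rmorphM; apply: idealMl.
have [s hs] := nA _ hJ.
exists (map f s) => x; split=> [|]; last first.
  by apply: span_min => // _ /mapP [y ys ->]; apply/hs/span_mem.
have [y <-] := f_surj x; move=> /hs [c ->].
exists (fun i => f (c i)); rewrite rmorph_sum size_map; apply: eq_bigr => i _.
by rewrite rmorphM (nth_map 0).
Qed.

Section HilbertBasis.
Variable A : comNzRingType.
Implicit Types (J : {poly A} -> Prop) (p : {poly A}).

Definition lead_ideal J d c := exists p, [/\ J p, (size p <= d.+1)%N & p`_d = c].

Lemma lead_ideal_ideal J d : ideal J -> ideal (lead_ideal J d).
Proof.
move=> hJ; split.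
- by exists 0; rewrite size_poly0 coef0; split=> //; apply: ideal0.
- move=> _ _ [p [Jp sp <-]] [q [Jq sq <-]]; exists (p - q); split.
  + exact: idealB.
  + by apply/leq_sizeP => j dj; rewrite coefB (leq_sizeP _ _ sp) ?(leq_sizeP _ _ sq) ?subr0.
  + by rewrite coefB.
- move=> a _ [p [Jp sp <-]]; exists (a%:P * p); split.
  + exact: idealMl.
  + by apply/leq_sizeP => j dj; rewrite coefCM (leq_sizeP _ _ sp) ?mulr0.
  + by rewrite coefCM.
Qed.

Lemma lead_ideal_mono J d e c :
  ideal J -> (d <= e)%N -> lead_ideal J d c -> lead_ideal J e c.
Proof.
move=> hJ de [p [Jp sp <-]]; exists ('X^(e - d) * p); split.
- exact: idealMl.
- apply/leq_sizeP => j ej; rewrite coefXnM; case: ltnP => // _.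
  by rewrite (leq_sizeP _ _ sp) //; lia.
- by rewrite coefXnM ltnNge leq_subr /= subKn.
Qed.

Lemma span_of_lead_ideal J G :
  ideal J -> (forall g, g \in G -> J g) ->
  (forall d c, lead_ideal J d c -> lead_ideal (span G) d c) ->
  forall p, J p -> span G p.
Proof.
move=> hJ GJ lead_G p; move: {2}(size p) (leqnn (size p)) => n.
elim: n p => [|n IH] p sp Jp.
  by move: sp; rewrite leqn0 size_poly_eq0 => /eqP ->; apply: ideal0 (span_ideal _).
have [q [Gq sq qn]] := lead_G n p`_n (ex_intro _ p (And3 Jp sp erefl)).
rewrite -(subrK q p); apply: (idealD (span_ideal _) _ Gq).
apply: IH; last exact: idealB Jp (span_min hJ GJ Gq).
apply/leq_sizeP => j; rewrite leq_eqVlt => /predU1P [<-|nj].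
  by rewrite coefB qn subrr.
by rewrite coefB (leq_sizeP _ _ sp) ?(leq_sizeP _ _ sq) ?subr0.
Qed.

Lemma noetherian_poly : noetherian A -> noetherian {poly A}.
Proof.
move=> nA J hJ.
have [D lead_D] := noetherian_chain_stable nA (fun d => lead_ideal_ideal d hJ)
  (fun d c => lead_ideal_mono hJ (leqnSn d)).
have [t ht] := choice (fun d => nA _ (lead_ideal_ideal d hJ)).
have [G [GJ lead_G]] := finite_witnesses
  (fun dc p => [/\ J p, (size p <= dc.1.+1)%N & p`_dc.1 = dc.2])
  [seq (d, c) | d <- iota 0 D.+1, c <- t d].
have G_J g : g \in G -> J g by move=> /GJ [? _ []].
exists G => p; split; last exact: span_min.
apply: span_of_lead_ideal => // n c Lnc.
pose d := minn n D.
have Ldc : lead_ideal J d c by rewrite /d; case: (leqP n D) => _ //; apply: lead_D Lnc.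
apply: lead_ideal_mono (span_ideal G) (geq_minl n D) _.
move: (proj1 (ht d c) Ldc); apply: span_min; first exact: lead_ideal_ideal (span_ideal G).
move=> c' tc'; have [|g Gg [_ sg gd]] := lead_G (d, c') _ (proj2 (ht d c') (span_mem tc')).
  by apply: allpairs_f_dep => //; rewrite mem_iota /= ltnS geq_minr.
by exists g; split=> //; apply: span_mem.
Qed.

End HilbertBasis.

Fixpoint poly_tower (k : nat) : comNzRingType :=
  if k is k'.+1 then {poly poly_tower k'} else int.

Lemma noetherian_poly_tower k : noetherian (poly_tower k).
Proof. by elim: k => [|k IH]; [apply: noetherian_int | apply: noetherian_poly]. Qed.

Lemma commr_rmorph_com (A R : comNzRingType) (f : A -> R) u : commr_rmorph f u.
Proof. by move=> a; apply: mulrC. Qed.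

Fixpoint poly_tower_eval (R : comNzRingType) (g : nat -> R) k :
    {rmorphism poly_tower k -> R} :=
  match k return {rmorphism poly_tower k -> R} with
  | 0 => (intr : int -> R) : {rmorphism int -> R}
  | k'.+1 => horner_morph (commr_rmorph_com (poly_tower_eval g k') (g k'))
  end.

Lemma poly_tower_eval_gen (R : comNzRingType) (g : nat -> R) k i :
  (i < k)%N -> exists y, poly_tower_eval g k y = g i.
Proof.
elim: k => [//|k IH]; rewrite ltnS leq_eqVlt => /predU1P [->|ik].
  by exists ('X : poly_tower k.+1); rewrite /= horner_morphX.
by have [y hy] := IH ik; exists (y%:P : poly_tower k.+1); rewrite /= horner_morphC.
Qed.

Lemma fin_gen_noetherian (R : comNzRingType) : fin_gen_ring R -> noetherian R.
Proof.
move=> [gs gen]; apply: (noetherian_surj (f := poly_tower_eval (nth 0 gs) (size gs))).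
  apply: gen => [|a b [y <-] [z <-]|a b [y <-] [z <-]|g gs_g].
  - by exists 1; rewrite rmorph1.
  - by exists (y - z); rewrite rmorphB.
  - by exists (y * z); rewrite rmorphM.
  - by rewrite -(nth_index 0 gs_g); apply: poly_tower_eval_gen; rewrite index_mem.
exact: noetherian_poly_tower.
Qed.

Section PrimeCover.
Variable R : comNzRingType.
Implicit Types (I J K : R -> Prop) (u : R).

Record prime_ideal I : Prop := PrimeIdeal {
  prime_ideal_ideal : ideal I;
  prime_ideal_proper : ~ I 1;
  prime_idealM : forall a b, I (a * b) -> I a \/ I b }.

Definition prime_cover I := exists n (P : 'I_n -> R -> Prop),
  (forall i, prime_ideal (P i)) /\ forall a : 'I_n -> R, (forall i, P i (a i)) -> I (\prod_i a i).

Lemma prime_cover_mul I J K : prime_cover I -> prime_cover J ->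
  (forall x y, I x -> J y -> K (x * y)) -> prime_cover K.
Proof.
move=> [n1 [P1 [P1_prime P1_cov]]] [n2 [P2 [P2_prime P2_cov]]] IJK.
pose P i := match split i with inl j => P1 j | inr k => P2 k end.
exists (n1 + n2)%N, P; split=> [i|a Pa]; first by rewrite /P; case: (split i).
rewrite big_split_ord /=; apply: IJK; [apply: P1_cov => j | apply: P2_cov => k].
- by move: (Pa (lshift n2 j)); rewrite /P -[lshift n2 j]/(unsplit (inl j)) unsplitK.
- by move: (Pa (rshift n1 k)); rewrite /P -[rshift n1 k]/(unsplit (inr k)) unsplitK.
Qed.

Definition ideal_adjoin I u z := exists2 m, I m & exists c, z = m + c * u.

Lemma ideal_adjoin_ideal I u : ideal I -> ideal (ideal_adjoin I u).
Proof.
move=> hI; split.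
- by exists 0; [apply: ideal0 | exists 0; rewrite mul0r addr0].
- move=> _ _ [m Im [c ->]] [m' Im' [c' ->]].
  by exists (m - m'); [apply: idealB | exists (c - c'); rewrite mulrBl opprD addrACA].
- move=> a _ [m Im [c ->]].
  by exists (a * m); [apply: idealMl | exists (a * c); rewrite mulrDr mulrA].
Qed.

Lemma ideal_adjoin_sub I u x : I x -> ideal_adjoin I u x.
Proof. by exists x => //; exists 0; rewrite mul0r addr0. Qed.

Lemma ideal_adjoin_self I u : ideal I -> ideal_adjoin I u u.
Proof. by exists 0; [apply: ideal0 | exists 1; rewrite mul1r add0r]. Qed.

(* A maximal counterexample M is prime: if ab is in M but a and b are not,
   M + (a) and M + (b) contain products of primes, and so does M. *)
Lemma noetherian_prime_cover I : noetherian R -> ideal I -> prime_cover I.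
Proof.
move=> nR hI; apply: contrapT => I_unc.
have [M [M_ideal M_unc] M_max] := noetherian_maximal
  (F := fun J => ideal J /\ ~ prime_cover J) nR (fun J => @proj1 _ _) (conj hI I_unc).
apply: M_unc; have [M1|M_proper] := EM (M 1).
  by exists 0%N, (fun=> M); split=> [[]|a _] //; rewrite big_ord0.
have adjoin_cov u : ~ M u -> prime_cover (ideal_adjoin M u).
  move=> Mu; apply: contrapT => adj_unc; apply: Mu.
  apply: (M_max _ (conj (ideal_adjoin_ideal u M_ideal) adj_unc)) (ideal_adjoin_self u M_ideal).
  exact: ideal_adjoin_sub.
have [M_prime|M_not_prime] := EM (forall a b, M (a * b) -> M a \/ M b).
  by exists 1%N, (fun=> M); split=> [_|a Ma]; [split | rewrite big_ord1].
have [a [b [Mab Ma Mb]]] : exists a b, [/\ M (a * b), ~ M a & ~ M b].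
  apply: contrapT => none; apply: M_not_prime => a b Mab; apply: contrapT => nab.
  by apply: none; exists a, b; split=> // ?; apply: nab; [left | right].
have := prime_cover_mul (adjoin_cov a Ma) (adjoin_cov b Mb); apply.
move=> _ _ [i Mi [c ->]] [j Mj [d ->]].
have -> : (i + c * a) * (j + d * b) = i * (j + d * b) + c * a * j + c * d * (a * b) by ring.
apply: (idealD M_ideal); last exact: idealMl.
by apply: (idealD M_ideal); [apply: idealMr | apply: idealMl].
Qed.

Lemma reduced_prime_cap0 : noetherian R -> reduced_ring R ->
  exists n (P : 'I_n -> R -> Prop),
    (forall i, prime_ideal (P i)) /\ forall z, (forall i, P i z) -> z = 0.
Proof.
move=> nR red.
have zero_ideal : ideal (fun z : R => z = 0).
  by split=> [|a b -> ->|a b ->]; rewrite ?subr0 ?mulr0.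
have [n [P [P_prime P_cov]]] := noetherian_prime_cover nR zero_ideal.
exists n, P; split=> // z Pz; apply: (red z n).
by rewrite -[n in z ^+ n]card_ord -prodr_const; apply: P_cov (fun=> z) Pz.
Qed.

End PrimeCover.

Definition int_range (N : nat) : seq int := [seq k%:Z - N%:Z | k <- iota 0 (N + N).+1].

Lemma mem_int_range N z : (`|z| <= N)%N -> z \in int_range N.
Proof.
move=> zN; apply/mapP; exists (absz (z + N%:Z)); first by rewrite mem_iota; lia.
lia.
Qed.

Section IndexIdeal.
Variables (R : comNzRingType) (r x : R).

Definition index_ideal (z : int) := exists a, a * x = r *~ z.

Lemma index_ideal_ideal : ideal index_ideal.
Proof.
split; first by exists 0; rewrite mul0r mulr0z.
- by move=> z1 z2 [a1 h1] [a2 h2]; exists (a1 - a2); rewrite mulrBl h1 h2 mulrzBr.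
- move=> c z [a h]; exists (c%:~R * a).
  by rewrite -mulrA h mulrzl -mulrzA mulrC.
Qed.

Variable m : nat.
Hypothesis index_ideal_gen : forall z, index_ideal z <-> (m%:Z %| z)%Z.

Lemma knutson_index_of_gen : knutson_index_is r x m.
Proof.
move=> y; split=> [[[a ->] [z e]]|[k ->]].
  have /index_ideal_gen /dvdzP [k zE] : index_ideal z by exists a.
  by exists k; rewrite e zE mulrC.
split; last by exists (m%:Z * k).
by have [a <-] := proj2 (index_ideal_gen _) (dvdz_mulr k (dvdzz m)); exists a.
Qed.

Lemma subindex_of_gen S s : s \in S -> s * x = r *~ m -> subindex_is S r x (Some m).
Proof.
move=> Ss sx; split; first by exists s => //; exists m%:Z.
move=> d; split=> [dm i [s' _ s'x]|]; last by apply; exists s.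
by apply: dvdz_trans dm _; apply/index_ideal_gen; exists s'.
Qed.

End IndexIdeal.

Section RegularElement.
Variables (R : comNzRingType) (alpha : {rmorphism R -> int}) (r : R).
Hypothesis alpha_r_neq0 : alpha r != 0.
Hypothesis mulr_regular : forall x, x * r = r *~ alpha x.

Lemma alpha_mul_regular a x v : a * x = r *~ v -> alpha a * alpha x = alpha r * v.
Proof. by move=> e; rewrite -rmorphM e rmorphMz mulrzz. Qed.

Lemma index_ideal_alpha x : index_ideal r x (alpha x).
Proof. by exists r; rewrite mulrC mulr_regular. Qed.

Lemma small_index_witness x m :
  (forall z, index_ideal r x z <-> (m%:Z %| z)%Z) ->
  exists a, a * x = r *~ m /\ (`|alpha a| <= `|alpha r|)%N.
Proof.
move=> index_gen; have [a ax] := proj2 (index_gen m) (dvdzz _).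
have e := alpha_mul_regular ax.
have [ax0|ax_neq0] := eqVneq (alpha x) 0.
  exists 0; rewrite mul0r rmorph0; split=> //.
  move: e; rewrite ax0 mulr0 => /esym/eqP; rewrite mulf_eq0 (negbTE alpha_r_neq0) /=.
  by move=> /eqP ->; rewrite mulr0z.
exists a; split=> //.
have := proj1 (index_gen _) (index_ideal_alpha x); rewrite dvdzE absz_nat => m_dvd.
have m_le : (m <= `|alpha x|)%N by apply: dvdn_leq; rewrite ?absz_gt0.
have : (`|alpha a| * `|alpha x| = `|alpha r| * m)%N by rewrite -abszM e abszM.
have : (0 < `|alpha x|)%N by rewrite absz_gt0.
nia.
Qed.

Variables (n : nat) (P : 'I_n -> R -> Prop).
Hypothesis P_prime : forall i, prime_ideal (P i).
Hypothesis P_cap0 : forall z, (forall i, P i z) -> z = 0.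

Lemma prime_sub_alpha i y : ~ P i r -> P i (y - (alpha y)%:~R).
Proof.
have [P_ideal _ P_mul] := P_prime i.
have : P i (r * (y - (alpha y)%:~R)).
  by rewrite mulrBr mulrzr [r * y]mulrC mulr_regular subrr; apply: ideal0.
by case/P_mul.
Qed.

Lemma mul_regular_iff a x v : a * x = r *~ v <->
  alpha a * alpha x = alpha r * v /\ forall i, P i r -> ~ P i x -> P i a.
Proof.
split=> [e|[e excP]].
  split=> [|i Pr nPx]; first exact: alpha_mul_regular.
  have [P_ideal _ P_mul] := P_prime i.
  have : P i (a * x) by rewrite e -mulrzr; apply: idealMr.
  by case/P_mul.
apply/subr0_eq/P_cap0 => i; have [P_ideal _ _] := P_prime i.
have [Pr|nPr] := EM (P i r).
  rewrite -mulrzr; apply: idealB (idealMr _ _ Pr) => //.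
  by have [Px|nPx] := EM (P i x); [apply: idealMl | apply: idealMr (excP _ Pr nPx)].
have e_R : (alpha a)%:~R * (alpha x)%:~R = (alpha r)%:~R * v%:~R :> R.
  by rewrite -!intrM e.
(* a x - v r is a combination of the y - alpha y, which all lie in P i. *)
have -> : a * x - r *~ v = (a - (alpha a)%:~R) * x
    + (alpha a)%:~R * (x - (alpha x)%:~R) - (r - (alpha r)%:~R) * v%:~R.
  by rewrite -mulrzr; ring: e_R.
have P_sub y : P i (y - (alpha y)%:~R) := prime_sub_alpha y nPr.
apply: (idealB P_ideal); last exact: idealMr.
by apply: (idealD P_ideal); [apply: idealMr | apply: idealMl].
Qed.

Lemma regular_index_witnesses : exists S : seq R, forall x (m : nat),
  (forall z, index_ideal r x z <-> (m%:Z %| z)%Z) -> exists2 s, s \in S & s * x = r *~ m.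
Proof.
pose Q (Tj : {set 'I_n} * int) s := (forall i, i \in Tj.1 -> P i s) /\ alpha s = Tj.2.
pose TJ := [seq (T, j) | T <- enum [set: {set 'I_n}], j <- int_range `|alpha r|].
have [S [_ hS]] := finite_witnesses Q TJ.
exists S => x m index_gen.
have [a [ax a_small]] := small_index_witness index_gen.
pose T := [set i | `[< P i r /\ ~ P i x >]].
have T_in : (T, alpha a) \in TJ.
  by apply: allpairs_f; [rewrite mem_enum in_setT | apply: mem_int_range].
have Q_a : exists s, Q (T, alpha a) s.
  exists a; split=> // i; rewrite inE => /asboolP [Pr nPx].
  exact: (proj1 (mul_regular_iff a x m) ax).2.
have [s Ss [Ts alpha_s]] := hS _ T_in Q_a.
exists s => //; apply/mul_regular_iff; split.
  by rewrite alpha_s; apply: alpha_mul_regular ax.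
by move=> i Pr nPx; apply: Ts; rewrite inE; apply/asboolP.
Qed.

End RegularElement.

Theorem proposition2p6 (R : comNzRingType) (alpha : {rmorphism R -> int}) (r : R) :
  fin_gen_ring R -> reduced_ring R -> regular_elt alpha r ->
  exists S : seq R, forall x : R,
    exists m : nat, knutson_index_is r x m /\ subindex_is S r x (Some m).
Proof.
move=> fg red [alpha_r mulr_regular].
have [n [P [P_prime P_cap0]]] := reduced_prime_cap0 (fin_gen_noetherian fg) red.
have [S witness] := regular_index_witnesses alpha_r mulr_regular P_prime P_cap0.
exists S => x; have [m index_gen] := int_ideal_principal (index_ideal_ideal r x).
have [s Ss sx] := witness x m index_gen.
by exists m; split; [apply: knutson_index_of_gen | apply: subindex_of_gen Ss sx].
Qed.
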